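(* Let $(R,\mathfrak m)$ be a Cohen–Macaulay local ring of dimension $d\ge2$ with infinite residue field, $I$ an $\mathfrak m$-primary ideal and $x\in I$ a superficial element for $I$, and assume $b_1^I(R)\neq-1$. If $\rho(I)\ge\omega(I)$, then $\rho(I)\ge\rho(I/(x))$.
   Context: The Ratliff–Rush closure of an ideal $K$ is $\widetilde K=\bigcup_{n\ge1}(K^{n+1}:K^n)$; $\rho(I)=\min\{i\ge1:\widetilde{I^n}=I^n\text{ for all }n\ge i\}$. With $S=R/(x)$, $\rho(I/(x))=\min\{k\ge1: I^nS=\widetilde{I^nS}\text{ for all }n\ge k\}$. The quotient map $\pi:R\to S$ induces maps $\pi_n:\widetilde{I^n}/I^n\to\widetilde{I^nS}/I^nS$, and $\omega(I)=\min\{k\ge1:\pi_n\text{ surjective for all }n\ge k\}$. $\mathcal R(I)=\bigoplus_{n\ge0}I^nt^n$, $\mathfrak M=\mathfrak m\oplus\bigoplus_{n\ge1}I^nt^n$, $L^I(R)=\bigoplus_{n\ge0}R/I^{n+1}$ (degree $n$ piece $R/I^{n+1}$) as graded $\mathcal R(I)$-module, $H^i$ local cohomology with respect to $\mathfrak M$, $\operatorname{end}(M)=\sup\{n:M_n\ne0\}$, $b_1^I(R)=\operatorname{end}(H^1(L^I(R)))$. An element $x\in I$ is superficial for $I$ if there is $c>0$ with $(I^{n+1}:x)\cap I^c=I^n$ for all $n\ge c$. *)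

From mathcomp Require Import all_boot all_order all_algebra.
Set Implicit Arguments. Unset Strict Implicit. Unset Printing Implicit Defensive.
Import Order.TTheory GRing.Theory Num.Theory.
Local Open Scope ring_scope.

Section CommAlg.
Variable R : comNzRingType.

Definition subI (J K : R -> Prop) := forall r, J r -> K r.
Definition eqI (J K : R -> Prop) := forall r, J r <-> K r.

Definition is_ideal (J : R -> Prop) :=
  [/\ J 0, (forall a b, J a -> J b -> J (a + b)) & (forall r a, J a -> J (r * a))].

Definition gen (S : R -> Prop) : R -> Prop :=
  fun z => forall J, is_ideal J -> subI S J -> J z.

Definition zeroI : R -> Prop := fun z => z = 0.
Definition principal (x : R) : R -> Prop := gen (fun z => z = x).
Definition iprod (J K : R -> Prop) : R -> Prop :=
  gen (fun z => exists a b, [/\ J a, K b & z = a * b]).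
Definition isum (J K : R -> Prop) : R -> Prop := gen (fun z => J z \/ K z).
Definition ipow (J : R -> Prop) (n : nat) : R -> Prop := iter n (iprod J) (fun _ => True).
Definition colon (J K : R -> Prop) : R -> Prop := fun r => forall y, K y -> J (r * y).

Definition is_prime (P : R -> Prop) :=
  [/\ is_ideal P, ~ P 1 & forall a b, P (a * b) -> P a \/ P b].
Definition is_maximal (M : R -> Prop) :=
  [/\ is_ideal M, ~ M 1 & forall J, is_ideal J -> subI M J -> J 1 \/ eqI J M].
Definition is_local (m : R -> Prop) :=
  is_maximal m /\ forall J, is_maximal J -> eqI J m.
Definition noetherian :=
  forall J, is_ideal J -> exists s : seq R, eqI J (gen (fun r => r \in s)).
Definition has_prime_chain (n : nat) :=
  exists p : nat -> (R -> Prop),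
    (forall i, (i <= n)%N -> is_prime (p i)) /\
    (forall i, (i < n)%N -> subI (p i) (p i.+1) /\ ~ subI (p i.+1) (p i)).
Definition krull_dim (d : nat) := has_prime_chain d /\ ~ has_prime_chain d.+1.
Definition regular_seq_in (m : R -> Prop) (xs : seq R) :=
  [/\ forall y, y \in xs -> m y,
      ~ gen (fun r => r \in xs) 1 &
      forall i, (i < size xs)%N -> forall r,
        gen (fun z => z \in take i xs) (nth 0 xs i * r) ->
        gen (fun z => z \in take i xs) r].
Definition depth_eq (m : R -> Prop) (t : nat) :=
  (exists xs, size xs = t /\ regular_seq_in m xs) /\
  ~ (exists xs, size xs = t.+1 /\ regular_seq_in m xs).
Definition cohen_macaulay (m : R -> Prop) (d : nat) := krull_dim d /\ depth_eq m d.
(* residue field R/m infinite: no finite list of representatives *)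
Definition infinite_residue (m : R -> Prop) :=
  forall s : seq R, exists r, forall y, y \in s -> ~ m (r - y).
Definition m_primary (m I : R -> Prop) :=
  is_ideal I /\ forall r, m r <-> exists n, I (r ^+ n).
Definition superficial (I : R -> Prop) (x : R) :=
  I x /\ exists c, (0 < c)%N /\ forall n, (c <= n)%N ->
    eqI (fun y => ipow I n.+1 (y * x) /\ ipow I c y) (ipow I n).

Definition RR (K : R -> Prop) : R -> Prop :=
  fun r => exists n, (1 <= n)%N /\ colon (ipow K n.+1) (ipow K n) r.
(* Ratliff-Rush closure computed in R/N, expressed through preimages in R:
   for K an ideal of R, the preimage of the Ratliff-Rush closure of KR/N.
   ((K(R/N))^n has preimage K^n + N and colons correspond.) *)
Definition RRq (N K : R -> Prop) : R -> Prop :=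
  fun r => exists n, (1 <= n)%N /\
    colon (isum (ipow K n.+1) N) (isum (ipow K n) N) r.

Definition rho_ok (I : R -> Prop) (i : nat) :=
  (1 <= i)%N /\ forall n, (i <= n)%N -> eqI (RR (ipow I n)) (ipow I n).
Definition is_rho (I : R -> Prop) (r : nat) :=
  rho_ok I r /\ forall i, rho_ok I i -> (r <= i)%N.
(* same for I/(x) in S = R/(x): I^n S = \widetilde{I^n S}, via preimages *)
Definition rhoS_ok (I : R -> Prop) (x : R) (k : nat) :=
  (1 <= k)%N /\ forall n, (k <= n)%N ->
    eqI (RRq (principal x) (ipow I n)) (isum (ipow I n) (principal x)).
Definition is_rhoS (I : R -> Prop) (x : R) (s : nat) :=
  rhoS_ok I x s /\ forall k, rhoS_ok I x k -> (s <= k)%N.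
(* pi_n : \widetilde{I^n}/I^n -> \widetilde{I^n S}/I^n S is surjective *)
Definition pi_surj (I : R -> Prop) (x : R) (n : nat) :=
  forall y, RRq (principal x) (ipow I n) y ->
    exists z, RR (ipow I n) z /\ isum (ipow I n) (principal x) (y - z).
Definition omega_ok (I : R -> Prop) (x : R) (k : nat) :=
  (1 <= k)%N /\ forall n, (k <= n)%N -> pi_surj I x n.
Definition is_omega (I : R -> Prop) (x : R) (w : nat) :=
  omega_ok I x w /\ forall k, omega_ok I x k -> (w <= k)%N.

(* congruence modulo I^e (e : int), trivial for e <= 0.
   The degree-m piece of L is R/I^(m+1) (and 0 for m < 0), so equality in
   L_m is congL I (m+1). *)
Definition congL (I : R -> Prop) (e : int) (a b : R) : Prop :=
  match e with Posz n => ipow I n (a - b) | Negz _ => True end.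
(* degree j component of \mathfrak M = m + It + I^2t^2 + ... (as subset of R) *)
Definition Mdeg (m I : R -> Prop) (j : nat) : R -> Prop :=
  if j == 0%N then m else ipow I j.
(* degree j component of \mathfrak M^n ; \mathfrak M^0 = Rees algebra *)
Fixpoint MPow (m I : R -> Prop) (n j : nat) : R -> Prop :=
  match n with
  | 0%N => ipow I j
  | n'.+1 => gen (fun z => exists j1 j2 a b,
               [/\ (j1 + j2)%N = j, Mdeg m I j1 a, MPow m I n' j2 b & z = a * b])
  end.
(* phi = (phi_j)_j represents a homogeneous R(I)-linear map of degree k
   from \mathfrak M^n to L^I(R): phi_j maps (\mathfrak M^n)_j to L_{j+k}. *)
Definition is_hom (m I : R -> Prop) (n : nat) (k : int) (phi : nat -> R -> R) :=
  (forall j u v, MPow m I n j u -> MPow m I n j v ->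
     congL I (j%:Z + k + 1) (phi j (u + v)) (phi j u + phi j v)) /\
  (forall e j a u, ipow I e a -> MPow m I n j u ->
     congL I ((j + e)%N%:Z + k + 1) (phi (j + e)%N (a * u)) (a * phi j u)).
(* [H^1_{\mathfrak M}(L)]_k <> 0, where H^1 = coker(L -> D(L)),
   D(L) = lim_n *Hom_{R(I)}(\mathfrak M^n, L) the ideal transform. *)
Definition H1_nonzero (m I : R -> Prop) (k : int) :=
  exists n phi, is_hom m I n k phi /\
    ~ (exists n' y, [/\ (n <= n')%N, (k < 0 -> y = 0) &
         forall j u, MPow m I n' j u -> congL I (j%:Z + k + 1) (phi j u) (u * y)]).
(* b_1^I(R) = end(H^1(L^I(R))) = -1 *)
Definition b1_eq_m1 (m I : R -> Prop) :=
  H1_nonzero m I (-1) /\ forall k : int, -1 < k -> ~ H1_nonzero m I k.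

End CommAlg.

(* If n >= rho(I) >= omega(I), every element of the Ratliff-Rush closure of
   I^n S lifts, modulo I^n S, to an element of the Ratliff-Rush closure of I^n,
   which is I^n itself; so I^n S is Ratliff-Rush closed and rho(I) satisfies
   the condition defining rho(I/(x)). *)
From Stdlib Require Import Classical Wf_nat.
From mathcomp Require Import all_boot all_order all_algebra.
Set Implicit Arguments. Unset Strict Implicit. Unset Printing Implicit Defensive.
Import GRing.Theory.
Local Open Scope ring_scope.

Section RatliffRush.
Variable R : comNzRingType.
Implicit Types (J K N T : R -> Prop) (r u : R).

Lemma gen_ideal (S : R -> Prop) : is_ideal (gen S).
Proof.
split.
- by move=> J [J0 _ _] _.
- move=> a b Ha Hb J HJ HS; have [_ HD _] := HJ.
  exact: HD (Ha J HJ HS) (Hb J HJ HS).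
- move=> r a Ha J HJ HS; have [_ _ HM] := HJ.
  exact: HM (Ha J HJ HS).
Qed.

Lemma gen_sub (S : R -> Prop) r : S r -> gen S r.
Proof. by move=> Sr J _; apply. Qed.

Lemma isum_l J K r : J r -> isum J K r.
Proof. by move=> Jr; apply: gen_sub; left. Qed.

Lemma isum_r J K r : K r -> isum J K r.
Proof. by move=> Kr; apply: gen_sub; right. Qed.

Lemma isum_ideal J K : is_ideal (isum J K).
Proof. exact: gen_ideal. Qed.

Lemma mulr_preim_ideal T u : is_ideal T -> is_ideal (fun r => T (r * u)).
Proof.
case=> T0 TD TM; split.
- by rewrite mul0r.
- by move=> a b Ta Tb; rewrite mulrDl; apply: TD.
- by move=> r a Ta; rewrite -mulrA; apply: TM.
Qed.

Lemma isum_mul K N (k : nat) r u : is_ideal N ->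
  isum K N r -> isum (ipow K k) N u -> isum (ipow K k.+1) N (r * u).
Proof.
move=> [_ _ NM] Hr Hu.
apply: (Hr (fun r => isum (ipow K k.+1) N (r * u))).
  exact/mulr_preim_ideal/isum_ideal.
move=> a /= [Ka|Na]; last by apply: isum_r; rewrite mulrC; apply: NM.
rewrite mulrC.
apply: (Hu (fun u => isum (ipow K k.+1) N (u * a))).
  exact/mulr_preim_ideal/isum_ideal.
move=> b /= [Kb|Nb]; last by apply: isum_r; rewrite mulrC; apply: NM.
by apply: isum_l; apply: gen_sub; exists a, b; split; rewrite // mulrC.
Qed.

Lemma isum_sub_RRq N K : is_ideal N -> subI (isum K N) (RRq N K).
Proof. by move=> HN r Hr; exists 1%N; split=> // u; apply: isum_mul. Qed.

Lemma RRq_sub_isum (I : R -> Prop) (x : R) (n : nat) :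
  pi_surj I x n -> subI (RR (ipow I n)) (ipow I n) ->
  subI (RRq (principal x) (ipow I n)) (isum (ipow I n) (principal x)).
Proof.
move=> Hsurj HRR y Hy.
have [z [RRz Hyz]] := Hsurj y Hy.
have [_ HD _] := isum_ideal (ipow I n) (principal x).
by rewrite -(subrK z y); apply: HD => //; apply: isum_l; apply: HRR.
Qed.

Lemma rhoS_ok_rho_omega (I : R -> Prop) (x : R) (r w : nat) :
  rho_ok I r -> omega_ok I x w -> (w <= r)%N -> rhoS_ok I x r.
Proof.
move=> [r_gt0 Hrho] [_ Hom] le_wr; split=> // n le_rn y; split.
- apply: RRq_sub_isum; first exact: Hom (leq_trans le_wr le_rn).
  by move=> z /(Hrho n le_rn).
- exact/isum_sub_RRq/gen_ideal.
Qed.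

End RatliffRush.

Lemma ex_least_le (P : nat -> Prop) r :
  P r -> exists s, (P s /\ forall k, P k -> (s <= k)%N) /\ (s <= r)%N.
Proof.
move=> Pr.
have [s [[Ps s_least] _]] :=
  dec_inh_nat_subset_has_unique_least_element P (fun n => classic (P n)) (ex_intro _ r Pr).
have s_leq k : P k -> (s <= k)%N by move=> /s_least /leP.
by exists s; split; last exact: s_leq.
Qed.

Theorem corollary4p2 (R : comNzRingType) (m I : R -> Prop) (x : R) (d : nat) :
  is_local m -> noetherian R -> cohen_macaulay m d -> (2 <= d)%N ->
  infinite_residue m -> m_primary m I -> superficial I x ->
  ~ b1_eq_m1 m I ->
  forall r w : nat, is_rho I r -> is_omega I x w -> (w <= r)%N ->
  exists s, is_rhoS I x s /\ (s <= r)%N.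
Proof.
move=> _ _ _ _ _ _ _ _ r w [rho_r _] [omega_w _] le_wr.
exact/ex_least_le/(rhoS_ok_rho_omega rho_r omega_w le_wr).
Qed.
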